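(* Let $\lambda\in\mathbb{F}$ with $\lambda\neq0,1$, and let $0\le\delta\le1-q^{-1}$. Then $$\mathcal{D}_\lambda^{\le\delta}\subseteq\bigcup_{\mu_q(n)\le\ell<n}\ \bigcup_{J\in\Omega_\ell}\ \bigcup_{(a,b)\in(\tilde J^*\times\tilde J^* )^{\le\delta}}\mathcal{D}_{a,b}.$$
   Context: Let $q$ be a prime power, $\mathbb{F}=\mathbb{F}_{q^2}$, $G$ a finite abelian group of odd order $n$ with $\gcd(n,q)=1$, and $\mathbb{F}G$ its group algebra; scalars are identified with multiples of $1_G$. Let $\tau:\mathbb{F}G\to\mathbb{F}G$, $\sum_g\alpha_g g\mapsto\sum_g\alpha_g^q g^{-1}$. Let $e_0=\frac1n\sum_g g$. The primitive idempotents are $e_0$; $e_1,\dots,e_r$ ($\neq e_0$, fixed by $\tau$); and $e_{r+1},\tau(e_{r+1}),\dots,e_{r+s},\tau(e_{r+s})$ (not fixed by $\tau$). Put $\widehat{e}_{r+j}=e_{r+j}+\tau(e_{r+j})$, $\widehat{E}^\dagger=\{e_1,\dots,e_r,\widehat{e}_{r+1},\dots,\widehat{e}_{r+s}\}$. Let $\mu_q(n)=\min\{\dim_{\mathbb{F}}\mathbb{F}Ge: e\text{ primitive idempotent},\ e\neq e_0\}$. The Hamming weight $\mathrm{wt}_H$ of $\sum_g a_gg$ is $|\{g:a_g\ne0\}|$, and $\mathrm{wt}_H(a,b)=\mathrm{wt}_H(a)+\mathrm{wt}_H(b)$. For $a,b\in\mathbb{F}G$, $\mathcal{C}_{a,b}=\{(sa,sb):s\in\mathbb{F}G\}$;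 $\mathcal{D}_\lambda=\{\mathcal{C}_{1,\beta}:\beta\in\mathbb{F}G,\ \beta\,\tau(\beta)=\lambda-1\}$; $\mathcal{D}_{a,b}=\{\mathcal{C}\in\mathcal{D}_\lambda:(a,b)\in\mathcal{C}\}$; $\mathcal{D}_\lambda^{\le\delta}=\{\mathcal{C}\in\mathcal{D}_\lambda: \min_{0\ne c\in\mathcal{C}}\mathrm{wt}_H(c)/(2n)\le\delta\}$. For $a\in\mathbb{F}G$, $\widehat{E}_a^\dagger=\{e\in\widehat{E}^\dagger:ea\neq0\}$ and $L_a=\bigoplus_{e\in\widehat{E}_a^\dagger}\mathbb{F}Ge$. For an integer $\ell$, $\Omega_\ell$ is the set of subspaces $J=\bigoplus_{e\in S}\mathbb{F}Ge$ with $S\subseteq\widehat{E}^\dagger$ and $\dim_{\mathbb{F}}J=\ell$. For $J\in\Omega_\ell$, $\tilde J=\mathbb{F}Ge_0+J$, $\tilde J^*=\{a\in\tilde J: L_a=J\}$, and $(\tilde J^*\times\tilde J^* )^{\le\delta}=\{(a,b)\in\tilde J^*\times\tilde J^*:\mathrm{wt}_H(a,b)\le 2n\delta\}$. *)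

From HB Require Import structures.
From mathcomp Require Import all_boot all_order all_algebra all_fingroup.
Set Implicit Arguments. Unset Strict Implicit. Unset Printing Implicit Defensive.
Import Order.TTheory GRing.Theory Num.Theory.
Local Open Scope ring_scope.

Section GroupAlgebra.
Variables (F : finFieldType) (gT : finGroupType) (q : nat).

(* The group algebra F G, elements sum_g a_g g encoded as coefficient functions
   g |-> a_g; F^o makes it an F-vector space ({ffun _ -> F^o} is a vectType). *)
Definition FG := {ffun gT -> F^o}.

Definition gelt (g : gT) : FG := [ffun h => if h == g then 1 else 0].

Definition gmul (a b : FG) : FG :=
  [ffun g => \sum_(h : gT) a h * b ((h^-1 * g)%g)].

Definition gscal (c : F) : FG := [ffun g => if g == 1%g then c else 0].

Definition tau (a : FG) : FG := [ffun g => (a (g^-1)%g) ^+ q].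

Definition e0 : FG := [ffun _ => (#|gT|%:R)^-1].

Definition idem (e : FG) : bool := gmul e e == e.

Definition primitive (e : FG) : bool :=
  [&& idem e, e != (0 : FG) &
   [forall f1 : FG, forall f2 : FG,
      ~~ [&& idem f1, idem f2, f1 != 0, f2 != 0, gmul f1 f2 == 0 & f1 + f2 == e]]].

Definition Ehat (x : FG) : bool :=
  [exists e : FG, [&& primitive e, e != e0, tau e == e & x == e]] ||
  [exists e : FG, [&& primitive e, tau e != e & x == e + tau e]].

Definition ideal (e : FG) : {vspace FG} := <<[seq gmul (gelt g) e | g : gT]>>%VS.

(* mu_q(n): min dimension of F G e over primitive e <> e0
   (default value n = |G| when there is no such e, i.e. n = 1) *)
Definition mu_q : nat :=
  \big[minn/#|gT|]_(e : FG | primitive e && (e != e0)) \dim (ideal e).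

Definition L_ (a : FG) : {vspace FG} :=
  (\sum_(e : FG | Ehat e && (gmul e a != (0%R : FG))) ideal e)%VS.

Definition wtH (a : FG) : nat := #|[set g : gT | a g != 0]|.
Definition wtH2 (c : FG * FG) : nat := wtH c.1 + wtH c.2.

Definition code (a b : FG) : {set FG * FG} :=
  [set (gmul s a, gmul s b) | s : FG].

(* minimum Hamming weight of the nonzero codewords (default 2n if none) *)
Definition minwt (C : {set FG * FG}) : nat :=
  \big[minn/(2 * #|gT|)%N]_(c in C | c != (0, 0)) wtH2 c.

Definition in_D (lam : F) (C : {set FG * FG}) : Prop :=
  exists beta : FG, gmul beta (tau beta) = gscal (lam - 1) /\ C = code (gscal 1) beta.

Definition sumideal (S : {set FG}) : {vspace FG} := (\sum_(e in S) ideal e)%VS.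

Definition in_Omega (l : nat) (J : {vspace FG}) : Prop :=
  exists S : {set FG}, {subset S <= Ehat} /\ J = sumideal S /\ \dim J = l.

Definition Jtilde (J : {vspace FG}) : {vspace FG} := (ideal e0 + J)%VS.

Definition in_Jstar (J : {vspace FG}) (a : FG) : bool :=
  (a \in Jtilde J) && (L_ a == J).

Definition in_Dab (lam : F) (a b : FG) (C : {set FG * FG}) : Prop :=
  in_D lam C /\ (a, b) \in C.

Definition in_Dle (R : realFieldType) (lam : F) (delta : R) (C : {set FG * FG}) : Prop :=
  in_D lam C /\ (minwt C)%:R / (2 * #|gT|)%:R <= delta.

End GroupAlgebra.

From HB Require Import structures.
From mathcomp Require Import all_boot all_order all_algebra all_fingroup all_field.
From mathcomp Require Import ring.
Set Implicit Arguments. Unset Strict Implicit. Unset Printing Implicit Defensive.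
Import Order.TTheory GRing.Theory Num.Theory.
Local Open Scope ring_scope.

(* A code C_{1,beta} in D_lambda^{<= delta} with delta < 1 has a nonzero
   codeword (s, s beta) of weight at most 2 n delta < 2 n.  As
   beta tau(beta) = lambda - 1 is a nonzero scalar, beta is invertible, so s and
   s beta are killed by the same idempotents of Ehat^dagger: L_s = L_{s beta}, and
   both lie in F G e_0 + L_s because every element is the sum of its components
   along the primitive idempotents.  If L_s were 0, then s and s beta would be
   nonzero multiples of e_0, each of full weight n, against the weight bound;
   hence L_s contains some F G e with e in Ehat^dagger and mu_q(n) <= dim L_s.
   Finally L_s is killed by e_0, so dim L_s < n. *)

Section PrimitiveIdempotents.
Variable R : finComNzRingType.

Definition idem_elt (e : R) := e * e == e.

Definition primitive_idem (e : R) := [&& idem_elt e, e != 0 &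
  [forall f1 : R, forall f2 : R,
     ~~ [&& idem_elt f1, idem_elt f2, f1 != 0, f2 != 0, f1 * f2 == 0 & f1 + f2 == e]]].

Lemma idem_eltM e f : idem_elt e -> idem_elt f -> idem_elt (e * f).
Proof. by move=> /eqP ee /eqP ff; rewrite /idem_elt mulrACA ee ff. Qed.

Lemma primitive_idem_elt e : primitive_idem e -> idem_elt e.
Proof. by case/and3P. Qed.

Lemma primitive_idem_mul e f :
  primitive_idem e -> idem_elt f -> e * f = 0 \/ e * f = e.
Proof.
move=> /and3P [ie _ /forallP /(_ (e * f)) /forallP /(_ (e - e * f)) nsplit] If.
move: (ie) (If) => /eqP ee /eqP ff.
have ief : idem_elt (e * f) by exact: idem_eltM.
have ie_ef : idem_elt (e - e * f).
  apply/eqP; transitivity (e * e - (e * e) * f - (e * e) * f + (e * e) * (f * f)).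
    by ring.
  by rewrite ee ff; ring.
have orth : e * f * (e - e * f) == 0.
  by rewrite mulrBr mulrACA ee ff mulrAC ee subrr.
move: nsplit; rewrite ief ie_ef orth (addrC (e * f)) subrK eqxx /= andbT.
case: eqP => [-> | _ /negPn]; first by left.
by rewrite subr_eq0 => /eqP <-; right.
Qed.

Lemma primitive_idem_orth e f :
  primitive_idem e -> primitive_idem f -> e != f -> e * f = 0.
Proof.
move=> Pe Pf; apply: contraNeq => ef0.
have [/eqP|ef] := primitive_idem_mul Pe (primitive_idem_elt Pf); first by rewrite (negPf ef0).
have [|fe] := primitive_idem_mul Pf (primitive_idem_elt Pe).
  by rewrite mulrC => /eqP; rewrite (negPf ef0).
by apply/eqP; rewrite -ef -[RHS]fe mulrC.
Qed.

Definition idem_below (f : R) := [set g | idem_elt g && (g * f == g)].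

Lemma idem_below_proper f g :
  idem_elt f -> g * f = g -> g != f -> idem_below g \proper idem_below f.
Proof.
move=> If gf gnf; apply/properP; rewrite /idem_below; split.
  apply/subsetP => h; rewrite !inE => /andP [-> /eqP hg].
  by rewrite -{1}hg -mulrA gf hg eqxx.
exists f; rewrite !inE If /=; first by rewrite (eqP If).
by rewrite mulrC gf.
Qed.

(* A non-primitive nonzero idempotent is the sum of two orthogonal ones, each
   with strictly fewer idempotents below it. *)
Lemma sum_primitive_idem_mul f :
  idem_elt f -> \sum_(e | primitive_idem e) e * f = f.
Proof.
move Hcard : #|idem_below f| => n; elim/ltn_ind: n f Hcard => n IH f Hcard If.
have [->|f0] := eqVneq f 0; first by rewrite big1 // => e _; rewrite mulr0.
have [Pf|] := boolP (primitive_idem f).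
  rewrite (bigD1 f) //= big1 ?addr0 ?(eqP If) // => e /andP [Pe nef].
  exact: primitive_idem_orth.
rewrite /primitive_idem If f0 /= => /forallPn [f1 /forallPn [f2 /negPn]].
case/and5P => I1 I2 n1 n2 /andP [/eqP o /eqP s].
have f1f : f1 * f = f1 by rewrite -s mulrDr (eqP I1) o addr0.
have f2f : f2 * f = f2 by rewrite -s mulrDr mulrC o (eqP I2) add0r.
have lt_below g : idem_elt g -> g * f = g -> g != f -> (#|idem_below g| < n)%N.
  by move=> Ig gf gnf; rewrite -Hcard proper_card ?idem_below_proper.
have f1nf : f1 != f.
  by apply: contra n2 => /eqP f1E; apply/eqP/(addrI f1); rewrite addr0 s f1E.
have f2nf : f2 != f.
  by apply: contra n1 => /eqP f2E; apply/eqP/(addIr f2); rewrite add0r s f2E.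
rewrite -{2}s -(IH _ (lt_below _ I1 f1f f1nf) f1 erefl I1).
rewrite -(IH _ (lt_below _ I2 f2f f2nf) f2 erefl I2) -big_split /=.
by apply: eq_bigr => e _; rewrite -mulrDr s.
Qed.

Lemma sum_primitive_idem : \sum_(e | primitive_idem e) e = 1.
Proof.
rewrite -[RHS](@sum_primitive_idem_mul 1); last by rewrite /idem_elt mulr1.
by apply: eq_bigr => e _; rewrite mulr1.
Qed.
End PrimitiveIdempotents.

Section GroupAlgebraRing.
Variables (F : finFieldType) (gT : finGroupType).
Local Notation FG := (FG F gT).
Local Notation gmul := (@gmul F gT).

Lemma gmulA : associative gmul.
Proof.
move=> a b c; apply/ffunP=> g; rewrite !ffunE.
under [RHS]eq_bigr do rewrite ffunE big_distrl /=.
rewrite [RHS]exchange_big /=; apply: eq_bigr => k _.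
rewrite ffunE big_distrr /= [RHS](reindex_inj (mulgI k)) /=.
by apply: eq_bigr => h _; rewrite mulKg mulrA invMg mulgA.
Qed.

Lemma gmul1l : left_id (gscal gT 1) gmul.
Proof.
move=> a; apply/ffunP=> g; rewrite ffunE (bigD1 1%g) //= big1 => [|h /negPf h1].
  by rewrite !ffunE eqxx mul1r invg1 mul1g addr0.
by rewrite ffunE h1 mul0r.
Qed.

Lemma gmulDl : left_distributive gmul +%R.
Proof.
move=> a b c; apply/ffunP=> g; rewrite !ffunE -big_split /=.
by apply: eq_bigr => h _; rewrite ffunE mulrDl.
Qed.

Lemma gmulZl (c : F) (a b : FG) : gmul (c *: a) b = c *: gmul a b.
Proof.
apply/ffunP => g; rewrite !ffunE scaler_sumr /=.
by apply: eq_bigr => h _; rewrite ffunE -mulrA.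
Qed.

Lemma gscal1_neq0 : gscal gT 1 != 0 :> FG.
Proof. by apply/eqP => /ffunP /(_ 1%g); rewrite !ffunE eqxx; apply/eqP/oner_neq0. Qed.

Lemma gmulC : abelian [set: gT] -> commutative gmul.
Proof.
move=> Hab a b; apply/ffunP=> g; rewrite !ffunE.
rewrite (reindex (fun h => g * h^-1)%g) /=; last first.
  by exists (fun h => h^-1 * g)%g => h _ /=; rewrite invMg invgK ?mulgKV ?mulKVg.
apply: eq_bigr => h _; rewrite invMg invgK mulgKV mulrC.
by rewrite (centsP Hab g (in_setT g) (h^-1)%g (in_setT _)).
Qed.
End GroupAlgebraRing.

(* The abelianness proof is a parameter only so that the commutative algebra
   structure can be registered on F G. *)
Definition comFG (F : finFieldType) (gT : finGroupType) (Hab : abelian [set: gT]) :=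
  FG F gT.
Arguments comFG : clear implicits.

Section ComFGInstances.
Variables (F : finFieldType) (gT : finGroupType) (Hab : abelian [set: gT]).
HB.instance Definition _ := GRing.Lmodule.on (comFG F gT Hab).
HB.instance Definition _ := Finite.on (comFG F gT Hab).
HB.instance Definition _ := GRing.Zmodule_isComNzRing.Build (comFG F gT Hab)
  (@gmulA F gT) (gmulC Hab) (@gmul1l F gT) (@gmulDl F gT) (@gscal1_neq0 F gT).
HB.instance Definition _ := GRing.Lmodule_isLalgebra.Build F (comFG F gT Hab)
  (fun c a b => esym (gmulZl c a b)).
HB.instance Definition _ := GRing.Lalgebra_isComAlgebra.Build F (comFG F gT Hab).
End ComFGInstances.

Section GroupAlgebra.
Variables (F : finFieldType) (gT : finGroupType) (Hab : abelian [set: gT]).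
Local Notation A := (comFG F gT Hab).

Lemma regular_scaleE (a b : F) : a *: (b : F^o) = a * b.
Proof. by []. Qed.

Lemma gscalE (c : F) : gscal gT c = c%:A :> A.
Proof. by apply/ffunP => g; rewrite !ffunE regular_scaleE; case: eqP; rewrite ?mulr1 ?mulr0. Qed.

Lemma gmulE (x y : A) : gmul x y = x * y.
Proof. by []. Qed.

Lemma primitiveE (e : A) : primitive e = primitive_idem e.
Proof. by []. Qed.

Lemma FG_expand (y : A) : y = \sum_g y g *: (gelt F g : A).
Proof.
apply/ffunP => k; rewrite sum_ffunE (bigD1 k) //= big1 => [|g gk];
  rewrite !ffunE regular_scaleE.
  by rewrite eqxx mulr1 addr0.
by rewrite eq_sym (negPf gk) mulr0.
Qed.

Lemma idealP (x z : A) : reflect (exists y : A, z = y * x) (z \in ideal x).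
Proof.
apply: (iffP idP) => [|[y ->]].
  rewrite /ideal; set X := (X in <<X>>%VS) => /(@coord_span _ _ _ (in_tuple X)) ->.
  elim/big_ind: _ => [|_ _ [y1 ->] [y2 ->]|i _]; first by exists 0; rewrite mul0r.
    by exists (y1 + y2); rewrite mulrDl.
  have /mapP [g _ ->] : X`_i \in X by apply/mem_nth/ltn_ord.
  by exists (coord (in_tuple X) i z *: gelt F g); rewrite -scalerAl.
rewrite {1}(FG_expand y) mulr_suml; apply: memv_suml => g _.
by rewrite -scalerAl; apply/memvZ/memv_span/map_f; rewrite mem_enum.
Qed.

Lemma ideal_mul (x y : A) : y * x \in ideal x.
Proof. by apply/idealP; exists y. Qed.

Lemma ideal_sub (e x : A) : e * x = e -> (ideal e <= ideal x)%VS.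
Proof. by move=> ex; apply/subvP => _ /idealP [y ->]; rewrite -ex mulrA ideal_mul. Qed.

Lemma dim_FG : \dim (fullv : {vspace A}) = #|gT|.
Proof. by rewrite dimvf /dim /= muln1. Qed.

Section Averaging.
Hypothesis Hn : (#|gT|%:R : F) != 0.
Local Notation E0 := (e0 F gT : A).

Lemma mul_e0 (y : A) : y * E0 = (\sum_h y h) *: E0.
Proof.
apply/ffunP => g; rewrite !ffunE regular_scaleE mulr_suml.
by apply: eq_bigr => h _; rewrite ffunE.
Qed.

Lemma e0_neq0 : E0 != 0.
Proof. by apply/eqP => /ffunP /(_ 1%g); rewrite !ffunE => /eqP; rewrite invr_eq0 (negPf Hn). Qed.

Lemma e0_idem : E0 * E0 = E0.
Proof.
rewrite mul_e0 (eq_bigr (fun=> #|gT|%:R^-1)) => [|h _]; last by rewrite ffunE.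
by rewrite sumr_const -[#|xpredT|]/#|gT| -(mulr_natr #|gT|%:R^-1) mulVf ?scale1r.
Qed.

Lemma idem_below_e0 (f : A) : idem_elt f -> f * E0 = f -> f = 0 \/ f = E0.
Proof.
rewrite mul_e0; move: (\sum_h _) => c /eqP ff fE.
move: ff; rewrite -fE -scalerAl -scalerAr e0_idem scalerA => /eqP.
rewrite -subr_eq0 -scalerBl scaler_eq0 (negPf e0_neq0) orbF.
rewrite -[X in _ - X]mulr1 -mulrBr mulf_eq0 subr_eq0 => /orP [/eqP->|/eqP->].
  by left; rewrite scale0r.
by right; rewrite scale1r.
Qed.

Lemma primitive_e0 : primitive_idem E0.
Proof.
rewrite /primitive_idem /idem_elt e0_idem eqxx e0_neq0 /=.
apply/forallP => f1; apply/forallP => f2; apply/negP.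
case/and5P => I1 I2 n1 n2 /andP [/eqP o /eqP s].
have below (f g : A) : idem_elt f -> f * g = 0 -> f + g = E0 -> f * E0 = f.
  by move=> /eqP ff fg sfg; rewrite -sfg mulrDr ff fg addr0.
have [/eqP|f1E] := idem_below_e0 I1 (below _ _ I1 o s); first by rewrite (negPf n1).
have [/eqP|f2E] := idem_below_e0 I2 (below _ _ I2 (etrans (mulrC _ _) o) (etrans (addrC _ _) s)).
  by rewrite (negPf n2).
by move: o; rewrite f1E f2E e0_idem => /eqP; rewrite (negPf e0_neq0).
Qed.

Lemma wtH_mul_e0 (y : A) : y * E0 = y -> y != 0 -> wtH y = #|gT|.
Proof.
rewrite mul_e0; move: (\sum_h _) => c yE y0; rewrite /wtH -cardsT.
apply: eq_card => g; rewrite !inE; apply: contraNneq y0 => yg0.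
by apply/eqP/ffunP => h; rewrite ffunE -yg0 -yE !ffunE.
Qed.
End Averaging.
End GroupAlgebra.

Section Frobenius.
Variables (F : finFieldType) (p q : nat).
Hypotheses (Hchar : p \in [pchar F]) (Hpq : p.-nat q) (HF : #|F| = (q ^ 2)%N).

Lemma exprqD (x y : F) : (x + y) ^+ q = x ^+ q + y ^+ q.
Proof. by apply: exprDn_pchar; rewrite (eq_pnat _ (pcharf_eq Hchar)). Qed.

Lemma expr0q : (0 : F) ^+ q = 0.
Proof. by rewrite expr0n; case: q Hpq. Qed.

Lemma exprq_sum (T : finType) (f : T -> F) : (\sum_i f i) ^+ q = \sum_i f i ^+ q.
Proof. exact: (big_morph _ exprqD expr0q). Qed.

Lemma exprq_nat m : (m%:R : F) ^+ q = m%:R.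
Proof. by elim: m => [|m IH]; rewrite ?expr0q // -addn1 natrD exprqD IH expr1n. Qed.

Lemma exprqK (x : F) : (x ^+ q) ^+ q = x.
Proof. by rewrite -exprM -[(q * q)%N]/(q ^ 2)%N -HF expf_card. Qed.
End Frobenius.

Section Tau.
Variables (F : finFieldType) (gT : finGroupType) (Hab : abelian [set: gT]) (p q : nat).
Hypotheses (Hchar : p \in [pchar F]) (Hpq : p.-nat q) (HF : #|F| = (q ^ 2)%N).
Hypothesis Hn : (#|gT|%:R : F) != 0.
Local Notation A := (comFG F gT Hab).
Local Notation E0 := (e0 F gT : A).
Local Notation tauA y := (tau q y : A).

Lemma tauM (x y : A) : tauA (x * y) = tauA x * tauA y.
Proof.
apply/ffunP => g; rewrite !ffunE (exprq_sum Hchar Hpq) [RHS](reindex_inj invg_inj) /=.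
apply: eq_bigr => h _; rewrite !ffunE exprMn !invgK invMg.
by rewrite (centsP Hab _ (in_setT _) _ (in_setT _)).
Qed.

Lemma tauK : involutive (tau q : A -> A).
Proof. by move=> y; apply/ffunP => g; rewrite !ffunE invgK (exprqK HF). Qed.

Lemma tau0 : tauA 0 = 0.
Proof. by apply/ffunP => g; rewrite !ffunE (expr0q F Hpq). Qed.

Lemma tau_e0 : tauA E0 = E0.
Proof. by apply/ffunP => g; rewrite !ffunE exprVn (exprq_nat Hchar Hpq). Qed.

Lemma primitive_tau_orth (e : A) : primitive_idem e -> tauA e != e -> e * tauA e = 0.
Proof.
move=> Pe te; have /eqP ee := primitive_idem_elt Pe.
have It : idem_elt (tauA e) by rewrite /idem_elt -tauM ee.
have [//|ete] := primitive_idem_mul Pe It.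
case/eqP: te; have := congr1 (tau q : A -> A) ete.
by rewrite tauM tauK mulrC ete => <-.
Qed.

Lemma tau_neq_e0 (e : A) : tauA e != e -> e != E0.
Proof. by apply: contraNneq => ->; rewrite tau_e0. Qed.

Lemma Ehat_mul_e0 (x : A) : Ehat q x -> x * E0 = 0.
Proof.
have orth e : primitive_idem e -> e != E0 -> e * E0 = 0.
  by move=> Pe ne; apply: primitive_idem_orth Pe (primitive_e0 Hab Hn) ne.
case/orP => /existsP [e].
  by case/and4P => Pe ne _ /eqP ->; apply: orth.
case/and3P => Pe te /eqP ->; have ne := tau_neq_e0 te.
by rewrite mulrDl orth // add0r -{1}tau_e0 -tauM orth // tau0.
Qed.

Lemma primitive_below_Ehat (e : A) :
  primitive_idem e -> e != E0 -> exists2 x : A, Ehat q x & e * x = e.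
Proof.
move=> Pe ne; have /eqP ee := primitive_idem_elt Pe.
have [te|te] := eqVneq (tauA e) e.
  by exists e => //; apply/orP; left; apply/existsP; exists e; rewrite primitiveE Pe ne te !eqxx.
exists (e + tauA e); last by rewrite mulrDr primitive_tau_orth // addr0.
by apply/orP; right; apply/existsP; exists e; rewrite primitiveE Pe te eqxx.
Qed.

Lemma mu_le_dim_Ehat (x : A) : Ehat q x -> (mu_q F gT <= \dim (ideal x))%N.
Proof.
have mu_le e : primitive_idem e -> e != E0 -> (mu_q F gT <= \dim (ideal e))%N.
  by move=> Pe ne; rewrite /mu_q -minEnat -leEnat; apply: bigmin_le_cond; apply/andP.
case/orP => /existsP [e].
  by case/and4P => Pe ne _ /eqP ->; apply: mu_le.
case/and3P; rewrite primitiveE => Pe te /eqP ->.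
apply: leq_trans (mu_le _ Pe (tau_neq_e0 te)) (dimvS (ideal_sub _)).
by rewrite mulrDr primitive_tau_orth // addr0 (eqP (primitive_idem_elt Pe)).
Qed.

Lemma sum_primitive_mul (y : A) : \sum_(e | primitive_idem e) y * e = y.
Proof. by rewrite -mulr_sumr sum_primitive_idem mulr1. Qed.

Lemma mem_Jtilde_L (y : A) : y \in Jtilde (L_ q y).
Proof.
rewrite -{1}(sum_primitive_mul y); apply: memv_suml => e Pe.
have [->|ne] := eqVneq e E0; first by rewrite (subvP (addvSl _ _)) ?ideal_mul.
have [x Ex ex] := primitive_below_Ehat Pe ne.
apply: (subvP (addvSr _ _)).
have [xy0|xy] := eqVneq (x * y) 0.
  by rewrite -ex mulrCA [y * x]mulrC xy0 mulr0 mem0v.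
rewrite -ex mulrA; apply: (subvP _ _ (ideal_mul _ _)).
by apply: (sumv_sup x) => //; rewrite Ex xy.
Qed.

Lemma mu_le_dim_L (y : A) : y * E0 != y -> (mu_q F gT <= \dim (L_ q y))%N.
Proof.
move=> yE; have /existsP [x /andP [Ex xy]] : [exists x : A, Ehat q x && (x * y != 0)].
  apply: contraNT yE => /existsPn ann.
  rewrite -{2}(sum_primitive_mul y) (bigD1 E0) ?primitive_e0 //= big1 ?addr0 // => e.
  case/andP => Pe ne; have [x Ex ex] := primitive_below_Ehat Pe ne.
  by move: (ann x); rewrite Ex negbK => /eqP xy0; rewrite -ex mulrCA [y * x]mulrC xy0 mulr0.
apply: leq_trans (mu_le_dim_Ehat Ex) (dimvS _).
by apply: (sumv_sup x) => //; rewrite Ex xy.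
Qed.

Lemma dim_L_lt (y : A) : (\dim (L_ q y) < #|gT|)%N.
Proof.
have LK : (L_ q y <= ideal (1 - E0))%VS.
  apply/subv_sumP => x /andP [Ex _]; apply: ideal_sub.
  by rewrite mulrBr mulr1 Ehat_mul_e0 // subr0.
rewrite -(dim_FG F Hab); apply: leq_ltn_trans (dimvS LK) _.
rewrite ltn_neqAle dimvS ?subvf // andbT; apply/negP => /eqP dimK.
have /idealP [z zE] : E0 \in ideal (1 - E0).
  have /eqP -> : (ideal (1 - E0) == fullv)%VS by rewrite eqEdim subvf dimK /=.
  exact: memvf.
have : E0 * E0 = 0 by rewrite {1}zE -mulrA mulrBl mul1r (e0_idem Hab Hn) subrr mulr0.
by rewrite (e0_idem Hab Hn); apply/eqP/(e0_neq0 Hab Hn).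
Qed.
End Tau.

Section Codes.
Variables (F : finFieldType) (gT : finGroupType) (Hab : abelian [set: gT]) (q : nat).
Local Notation A := (comFG F gT Hab).

Lemma L_in_Omega (y : A) : in_Omega q (\dim (L_ q y)) (L_ q y).
Proof.
exists [set e | Ehat q e && (gmul e y != 0)]; split => [e|].
  by rewrite inE => /andP [].
by split => //; apply: eq_bigl => e; rewrite inE.
Qed.

Lemma L_mulr_invertible (y beta gamma : A) :
  beta * gamma = 1 -> L_ q (y * beta) = L_ q y.
Proof.
move=> bg; apply: eq_bigl => x; rewrite !gmulE mulrA.
congr (_ && ~~ _); apply/eqP/eqP => [xyb|->]; last by rewrite mul0r.
by rewrite -[_ * y]mulr1 -bg mulrA xyb mul0r.
Qed.

Lemma minwt_attained (C : {set FG F gT * FG F gT}) :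
  (minwt C < 2 * #|gT|)%N -> exists2 c, (c \in C) && (c != (0, 0)) & wtH2 c = minwt C.
Proof.
rewrite /minwt; elim/big_ind: _ => [|m1 m2 IH1 IH2|c Pc _]; [by rewrite ltnn | | by exists c].
by case: (leqP m1 m2) => m12; rewrite ?(minn_idPl m12) ?(minn_idPr (ltnW m12)).
Qed.

Lemma double_card_gt0 : (0 < 2 * #|gT|)%N.
Proof. by rewrite muln_gt0 /=; apply/card_gt0P; exists 1%g. Qed.

Lemma light_codeword (R : realFieldType) (delta : R) (beta : A) :
  delta < 1 -> (minwt (code (gscal gT 1) beta))%:R / (2 * #|gT|)%:R <= delta ->
  exists2 s : A, s != 0 & (wtH2 (s, s * beta))%:R <= (2 * #|gT|)%:R * delta.
Proof.
move=> Hd1; rewrite ler_pdivrMr ?ltr0n ?double_card_gt0 // mulrC => Hmin.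
have [|c /andP [/imsetP [s _ ->] c0] wc] := minwt_attained (C := code (gscal gT 1) beta).
  by rewrite -(ltr_nat R); apply: le_lt_trans Hmin _; rewrite gtr_pMr ?ltr0n ?double_card_gt0.
move: c0 wc Hmin; rewrite !gmulE mulr1 => c0 <- light.
by exists s => //; apply: contraNneq c0 => ->; rewrite mul0r.
Qed.
End Codes.

Section Cover.
Variables (F : finFieldType) (gT : finGroupType) (Hab : abelian [set: gT]) (p q : nat).
Hypotheses (Hchar : p \in [pchar F]) (Hpq : p.-nat q) (HF : #|F| = (q ^ 2)%N).
Hypothesis Hn : (#|gT|%:R : F) != 0.
Local Notation A := (comFG F gT Hab).
Local Notation E0 := (e0 F gT : A).

Lemma Dle_sub_cover (R : realFieldType) (delta : R) (lam : F) (C : {set FG F gT * FG F gT}) :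
  delta < 1 -> lam != 1 -> in_Dle q lam delta C ->
  exists l : nat, (mu_q F gT <= l < #|gT|)%N /\
    exists J : {vspace FG F gT}, in_Omega q l J /\
      exists a b : FG F gT,
        [/\ in_Jstar q J a, in_Jstar q J b,
            (wtH2 (a, b))%:R <= (2 * #|gT|)%:R * delta
          & in_Dab q lam a b C].
Proof.
move=> Hd1 Hl1 [[beta [Hbeta ->]] Hmin].
have Hb : (beta : A) * tau q beta = (lam - 1)%:A by rewrite -gscalE.
have [gamma bg] : exists gamma : A, (beta : A) * gamma = 1.
  exists ((lam - 1)^-1 *: tau q beta).
  by rewrite -scalerAr Hb scalerA mulVf ?scale1r // subr_eq0.
have [s s0 light] := light_codeword Hd1 Hmin.
pose b := s * beta.
have wt_lt : (wtH2 (s, b) < 2 * #|gT|)%N.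
  by rewrite -(ltr_nat R); apply: le_lt_trans light _; rewrite gtr_pMr ?ltr0n ?double_card_gt0.
have sE0 : s * E0 != s.
  apply: contraTneq wt_lt => sE; rewrite -leqNgt.
  have bE : b * E0 = b by rewrite mulrAC sE.
  have b0 : b != 0 by apply: contraNneq s0 => b0; rewrite -[s]mulr1 -bg mulrA -/b b0 mul0r.
  by rewrite /wtH2 /= !wtH_mul_e0 // addnn -mul2n.
have Lb : L_ q b = L_ q s := L_mulr_invertible q s bg.
exists (\dim (L_ q s)); split.
  by rewrite (mu_le_dim_L Hchar Hpq HF Hn sE0) (dim_L_lt Hchar Hpq Hn).
exists (L_ q s); split; first exact: L_in_Omega.
exists s, b; split => //.
- by rewrite /in_Jstar (mem_Jtilde_L Hchar Hpq HF) eqxx.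
- by rewrite /in_Jstar -{1}Lb (mem_Jtilde_L Hchar Hpq HF) Lb eqxx.
split; first by exists beta.
by apply/imsetP; exists s; rewrite // gmulE mulr1.
Qed.
End Cover.

Theorem lemma3p11 (F : finFieldType) (gT : finGroupType) (p k q : nat)
  (Hp : prime p) (Hk : (0 < k)%N) (Hq : q = (p ^ k)%N)
  (HF : #|F| = (q ^ 2)%N)
  (Hab : abelian [set: gT]) (Hodd : odd #|gT|) (Hcop : coprime #|gT| q)
  (R : realFieldType) (delta : R)
  (Hd0 : 0 <= delta) (Hd1 : delta <= 1 - (q%:R)^-1)
  (lam : F) (Hl0 : lam != 0) (Hl1 : lam != 1) :
  forall C : {set FG F gT * FG F gT},
    in_Dle q lam delta C ->
    exists l : nat, (mu_q F gT <= l < #|gT|)%N /\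
      exists J : {vspace FG F gT}, in_Omega q l J /\
        exists a b : FG F gT,
          [/\ in_Jstar q J a, in_Jstar q J b,
              (wtH2 (a, b))%:R <= (2 * #|gT|)%:R * delta
            & in_Dab q lam a b C].
Proof.
have Hchar : p \in [pchar F].
  by apply: (card_finPcharP (n := (k * 2)%N)) => //; rewrite HF Hq expnM.
have Hpq : p.-nat q by rewrite Hq pnatX pnatE // inE eqxx.
have Hn : (#|gT|%:R : F) != 0.
  rewrite -(dvdn_pcharf Hchar) -prime_coprime // coprime_sym.
  by move: Hcop; rewrite Hq coprime_pexpr.
have delta_lt1 : delta < 1.
  apply: le_lt_trans Hd1 _; rewrite ltrBlDr ltrDl invr_gt0 ltr0n.
  by case/andP: Hpq.
by move=> C; apply: (Dle_sub_cover Hab Hchar Hpq HF Hn delta_lt1 Hl1).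
Qed.
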